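(* Let $\gamma\in\mathcal S_n$ and $\sigma=(\varepsilon,\varepsilon,\gamma;(123))$. Fix a positive integer $d$, and let $r$ be the number of cycles of $\gamma$ of length $d$. Suppose there do not exist lengths $d',d''$ of cycles of $\gamma$ (not necessarily distinct cycles) with $d\notin\{d',d''\}$ and $\operatorname{lcm}(d,d')=\operatorname{lcm}(d,d'')=\operatorname{lcm}(d',d'')$. Then $\sigma\notin\mathrm{Par}(n)$ if either <ul> <li>(i) $r=1$ and $n+d\equiv1\pmod3$, or</li> <li>(ii) $3\mid d$ and $3\nmid nr$.</li> </ul>
   Context: A Latin square of order $n$ is an $n\times n$ array with rows, columns and symbols indexed by $[n]$, each symbol occurring once in each row and each column, with triple set $O(L)$. Permutations act on the right; $\varepsilon$ is the identity; fixed points count as cycles of length $1$. A paratopism $(\alpha,\beta,\gamma;(123))$ maps $L$ to $L^\sigma$ with triple set $\{(z\gamma,x\alpha,y\beta):(x,y,z)\in O(L)\}$; it is an autoparatopism of $L$ if $L^\sigma=L$. $\mathrm{Par}(n)$ is the set of paratopisms that are autoparatopisms of at least one Latin square of order $n$. *)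

From mathcomp Require Import all_boot all_order all_fingroup.
Set Implicit Arguments. Unset Strict Implicit. Unset Printing Implicit Defensive.

(* Symbols, rows and columns are indexed by 'I_n (i.e. [n] shifted to 0..n-1). *)
Definition is_latin (n : nat) (L : 'I_n -> 'I_n -> 'I_n) : Prop :=
  (forall x, injective (L x)) /\ (forall y, injective (fun x => L x y)).

Definition triples (n : nat) (L : 'I_n -> 'I_n -> 'I_n) : {set 'I_n * 'I_n * 'I_n} :=
  [set t : 'I_n * 'I_n * 'I_n | t.2 == L t.1.1 t.1.2].

(* Triple set of L^sigma for sigma = (alpha, beta, gamma; (123)):
   {(z gamma, x alpha, y beta) : (x, y, z) in O(L)}; permutations act on the right,
   so x alpha is written alpha x. *)
Definition par123_image (n : nat) (alpha beta gamma : {perm 'I_n})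
    (O : {set 'I_n * 'I_n * 'I_n}) : {set 'I_n * 'I_n * 'I_n} :=
  [set (gamma t.2, alpha t.1.1, beta t.1.2) | t in O].

Definition is_autoparatopism123 (n : nat) (alpha beta gamma : {perm 'I_n})
    (L : 'I_n -> 'I_n -> 'I_n) : Prop :=
  par123_image alpha beta gamma (triples L) = triples L.

Definition in_Par123 (n : nat) (alpha beta gamma : {perm 'I_n}) : Prop :=
  exists L : 'I_n -> 'I_n -> 'I_n, is_latin L /\ is_autoparatopism123 alpha beta gamma L.

(* Cycles of a permutation (fixed points are cycles of length 1). *)
Definition cycle_length_of (n : nat) (g : {perm 'I_n}) (l : nat) : Prop :=
  exists2 c, c \in porbits g & #|c| = l.

Definition num_cycles_of_length (n : nat) (g : {perm 'I_n}) (d : nat) : nat :=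
  #|[set c in porbits g | #|c| == d]|.

(* If sigma = (e, e, gamma; (123)) is an autoparatopism of L, then
   L (gamma (L x y)) x = y, so gamma is an automorphism of L and sigma permutes
   the cells of L by tau (x, y) = (gamma (L x y), x), with tau^3 = gamma x gamma.
   Hence the cycle lengths of x, y and L x y are pairwise lcm-balanced, and the
   hypothesis forces a row in the set D of points on d-cycles and a column
   outside D to meet in a symbol of D.  The set S of cells whose row, column and
   symbol lie in D then has |D| (2|D| - n) elements.  S is tau-invariant, its
   tau-orbits have length d or 3d, length d only if 3 does not divide d, and a
   cell of tau-order d is determined by its row, so there are at most |D| of
   them.  Counting |S| modulo 3d yields the two obstructions. *)

From mathcomp Require Import all_boot all_order all_fingroup.
From mathcomp Require Import zify.
Set Implicit Arguments. Unset Strict Implicit. Unset Printing Implicit Defensive.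

Lemma lcmn_eq_of_dvd a b c :
  a %| lcmn b c -> b %| lcmn a c -> c %| lcmn a b ->
  lcmn a b = lcmn a c /\ lcmn a c = lcmn b c.
Proof.
by move=> a_bc b_ac c_ab; split; apply/eqP;
  rewrite eqn_dvd !dvdn_lcm ?dvdn_lcml ?dvdn_lcmr ?a_bc ?b_ac ?c_ab.
Qed.

Lemma mul3_dvdn_cases o d : 0 < d -> (forall t, (o %| 3 * t) = (d %| t)) ->
  o = 3 * d \/ o = d /\ ~~ (3 %| d).
Proof.
move=> d_gt0 o3t_dt.
have o_3d : o %| 3 * d by rewrite o3t_dt.
have /dvdnP[m o_md] : d %| o by rewrite -o3t_dt dvdn_mull.
have : m %| 3 by rewrite -(dvdn_pmul2r d_gt0) -o_md.
rewrite o_md in o3t_dt *; case: m o3t_dt {o_md o_3d} => [|[|[|[|m]]]] // o3t_dt _; last by left.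
right; rewrite mul1n in o3t_dt *; split=> //; apply/negP => /dvdnP[k d_k3].
have k_gt0 : 0 < k by lia.
have : d %| k by rewrite -o3t_dt d_k3 mulnC.
by move/(dvdn_leq k_gt0); lia.
Qed.

Lemma dvdn3_orbit_count e r n d : 3 %| d -> r * d <= n ->
  3 * e + r * (n - r * d) = r * (r * d) -> 3 %| n * r.
Proof.
move=> /dvdnP[k ->] rd_n count; apply/dvdnP; exists (2 * r * r * k - e).
rewrite mulnBl; nia.
Qed.

Lemma iter_eq_dvd (T : eqType) (f : T -> T) x c :
  0 < c -> iter c f x = x -> uniq (traject f x c) ->
  forall k, (iter k f x == x) = (c %| k).
Proof.
move=> c_gt0 fcx Ux k.
have fqx q : iter q (iter c f) x = x by elim: q => //= q ->.
have -> : iter k f x = iter (k %% c) f x.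
  by rewrite {1}(divn_eq k c) addnC iterD iterM fqx.
apply/eqP/idP => [fkx | /dvdnP[q ->]]; last by rewrite modnMl.
rewrite /dvdn; apply/eqP.
have := nth_uniq x (i := k %% c) (j := 0) _ _ Ux.
rewrite size_traject ltn_mod c_gt0 => /(_ isT isT).
by rewrite !nth_traject ?ltn_mod // fkx eqxx => /esym/eqP.
Qed.

Lemma iter_order_eq (T : finType) (f : T -> T) : injective f ->
  forall x k, (iter k f x == x) = (fingraph.order f x %| k).
Proof.
move=> f_inj x; apply: iter_eq_dvd; first exact: fingraph.order_gt0.
  exact: iter_order.
exact: orbit_uniq.
Qed.

Lemma order_f (T : finType) (f : T -> T) : injective f ->
  forall x, fingraph.order f (f x) = fingraph.order f x.
Proof. by move=> f_inj x; apply: eq_card => y; rewrite /in_mem /= -same_fconnect1. Qed.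

Definition cycle_len (T : finType) (s : {perm T}) x := #|porbit s x|.

Section CycleLength.

Variables (T : finType) (s : {perm T}).

Lemma iter_cycle_len x k : (iter k s x == x) = (cycle_len s x %| k).
Proof.
apply: iter_eq_dvd; first by rewrite lt0n card_porbit_neq0.
  exact: iter_porbit.
exact: uniq_traject_porbit.
Qed.

Lemma cycle_len_perm x : cycle_len s (s x) = cycle_len s x.
Proof. by rewrite /cycle_len -(porbit_perm s 1 x) expg1. Qed.

Lemma partition_porbits : partition (porbits s) [set: T].
Proof.
have /orbit_partition : [acts <[s]>%g, on [set: T] | 'P].
  by apply/actsP => a _ x; rewrite !inE.
rewrite -porbitE; congr partition; apply/setP => c.
by apply/imsetP/imsetP => -[x _ ->]; exists x.
Qed.

Lemma card_cycle_len_eq d : 0 < d ->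
  #|[set x | cycle_len s x == d]| = #|[set c in porbits s | #|c| == d]| * d.
Proof.
move=> d_gt0; apply: card_uniform_partition => [c|].
  by rewrite inE => /andP[_ /eqP].
have [_ /trivIsetS triv _] := and3P partition_porbits.
apply/and3P; split; last by rewrite inE cards0 eq_sym (negbTE (lt0n_neq0 d_gt0)) andbF.
- apply/eqP/setP => x; rewrite inE; apply/bigcupP/idP => [[c]|x_d].
    rewrite inE => /andP[/imsetP[y _ ->] /eqP <-] x_y.
    by rewrite /cycle_len (eqP (_ : porbit s x == porbit s y)) ?eq_porbit_mem.
  by exists (porbit s x); rewrite ?porbit_id // inE imset_f.
- by apply: triv; apply/subsetP => c; rewrite inE => /andP[].
Qed.

End CycleLength.

Lemma num_cycles_of_length_le n (g : {perm 'I_n}) d :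
  0 < d -> num_cycles_of_length g d * d <= n.
Proof.
by move=> d_gt0; rewrite -(card_cycle_len_eq g d_gt0) -[X in _ <= X]card_ord max_card.
Qed.

Definition lcm_balanced_pair n (g : {perm 'I_n}) d :=
  exists d' d'' : nat,
    [/\ cycle_length_of g d', cycle_length_of g d'', d <> d', d <> d'' &
        lcmn d d' = lcmn d d'' /\ lcmn d d'' = lcmn d' d''].

Lemma cycle_length_of_cycle_len n (g : {perm 'I_n}) x :
  cycle_length_of g (cycle_len g x).
Proof. by exists (porbit g x); rewrite ?imset_f. Qed.

Lemma autoparatopism123_11P n (g : {perm 'I_n}) L :
  is_autoparatopism123 1 1 g L -> forall x y, L (g (L x y)) x = y.
Proof.
move=> autL x y.
have : (g (L x y), x, y) \in par123_image 1 1 g (triples L).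
  by apply/imsetP; exists (x, y, L x y); rewrite ?inE //= !perm1.
by rewrite autL inE => /eqP.
Qed.

Section Autoparatopism.

Variables (n : nat) (g : {perm 'I_n}) (L : 'I_n -> 'I_n -> 'I_n).
Hypothesis Lg : forall x y, L (g (L x y)) x = y.

Lemma L_rotate x y : L (g y) (g (L x y)) = x.
Proof. by have := Lg (g (L x y)) x; rewrite [L (g _) x]Lg. Qed.

Lemma L_perm x y : L (g x) (g y) = g (L x y).
Proof. by have := Lg (g y) (g (L x y)); rewrite L_rotate. Qed.

Lemma L_iter k x y : L (iter k g x) (iter k g y) = iter k g (L x y).
Proof. by elim: k => //= k IHk; rewrite L_perm IHk. Qed.

Lemma cycle_len_L_dvd x y :
  cycle_len g (L x y) %| lcmn (cycle_len g x) (cycle_len g y).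
Proof.
set k := lcmn _ _.
have gkx : iter k g x = x by apply/eqP; rewrite iter_cycle_len dvdn_lcml.
have gky : iter k g y = y by apply/eqP; rewrite iter_cycle_len dvdn_lcmr.
by rewrite -iter_cycle_len -L_iter gkx gky.
Qed.

Lemma cycle_len_L_lcm x y :
  let a := cycle_len g x in let b := cycle_len g y in
  let c := cycle_len g (L x y) in
  lcmn a b = lcmn a c /\ lcmn a c = lcmn b c.
Proof.
have c_ab := cycle_len_L_dvd x y.
have := cycle_len_L_dvd (g (L x y)) x.
rewrite [L (g _) x]Lg cycle_len_perm (lcmnC _ (cycle_len g x)) => b_ac.
have := cycle_len_L_dvd (g y) (g (L x y)).
rewrite L_rotate !cycle_len_perm => a_bc.
exact: lcmn_eq_of_dvd.
Qed.

End Autoparatopism.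

Definition cell_shift n (g : {perm 'I_n}) (L : 'I_n -> 'I_n -> 'I_n) p :=
  (g (L p.1 p.2), p.1).

Section ClosedCells.

Variables (n : nat) (g : {perm 'I_n}) (L : 'I_n -> 'I_n -> 'I_n) (d : nat).
Hypotheses (latinL : is_latin L) (Lg : forall x y, L (g (L x y)) x = y).
Hypotheses (d_gt0 : 0 < d) (no_pair : ~ lcm_balanced_pair g d).

Let D := [set x | cycle_len g x == d].
Let S := [set p : 'I_n * 'I_n | [&& p.1 \in D, p.2 \in D & L p.1 p.2 \in D]].
Let tau := cell_shift g L.
Let Od := [set p | fingraph.order tau p == d].

Lemma cycle_len_L_eq x y :
  cycle_len g x = d -> cycle_len g y != d -> cycle_len g (L x y) = d.
Proof.
move=> x_d y_d; apply/eqP/negPn/negP => Lxy_d; apply: no_pair.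
exists (cycle_len g y), (cycle_len g (L x y)).
split; rewrite -?x_d; try exact: cycle_length_of_cycle_len; try exact: cycle_len_L_lcm.
- by move=> e; rewrite -e x_d eqxx in y_d.
- by move=> e; rewrite -e x_d eqxx in Lxy_d.
Qed.

Lemma card_closed_row x : x \in D ->
  #|[set y | (x, y) \in S]| + (n - #|D|) = #|D|.
Proof.
rewrite inE => /eqP x_d; have [/(_ x) Lx_inj _] := latinL.
have -> : n - #|D| = #|~: D| by have := cardsC D; rewrite card_ord; lia.
rewrite -(card_preimset D Lx_inj) -(cardsID D (L x @^-1: D)); congr (_ + _).
  by apply: eq_card => y; rewrite !inE x_d eqxx /= andbC.
apply: eq_card => y; rewrite !inE.
by case y_d: (cycle_len g y == d) => //=; rewrite (cycle_len_L_eq x_d) ?eqxx ?y_d.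
Qed.

Lemma card_closed_cells : #|S| + #|D| * (n - #|D|) = #|D| * #|D|.
Proof.
have row0 x : x \notin D -> #|[set y | (x, y) \in S]| = 0.
  rewrite inE => /negbTE x_d; apply/eqP; rewrite cards_eq0; apply/eqP/setP => y.
  by rewrite !inE x_d.
have -> : #|S| = \sum_x #|[set y | (x, y) \in S]|.
  under eq_bigr do rewrite -sum1dep_card big_mkcond /=.
  by rewrite pair_big -sum1_card big_mkcond [RHS]big_mkcond; apply: eq_bigr => -[x y].
rewrite (bigID (mem D)) /= [X in _ + X + _]big1 ?addn0; last by move=> x /row0.
by rewrite -!sum_nat_const -big_split; apply: eq_bigr => x; apply: card_closed_row.
Qed.

Lemma cell_shift_inj : injective tau.
Proof.
move=> [x y] [x' y'] [/perm_inj /= Lxy x_x']; rewrite -x_x' in Lxy *.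
by rewrite (latinL.1 x _ _ Lxy).
Qed.

Lemma iter_cell_shift3 k x y : iter (3 * k) tau (x, y) = (iter k g x, iter k g y).
Proof.
elim: k => [//|k IHk].
by rewrite mulnS iterD IHk /= /tau /cell_shift /= !Lg.
Qed.

Lemma cell_shift_closed p : (tau p \in S) = (p \in S).
Proof.
by case: p => x y; rewrite !inE /= Lg cycle_len_perm andbC -andbA.
Qed.

Lemma order_cell_shift_dvd3 p : p \in S ->
  forall t, (fingraph.order tau p %| 3 * t) = (d %| t).
Proof.
case: p => x y; rewrite !inE => /and3P[/= /eqP x_d /eqP y_d _] t.
rewrite -iter_order_eq; last exact: cell_shift_inj.
by rewrite iter_cell_shift3 xpair_eqE !iter_cycle_len x_d y_d andbb.
Qed.

Lemma cell_shift_order_d_snd p : p \in S -> fingraph.order tau p = d ->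
  p.2 = iter (d * d %/ 3) g p.1.
Proof.
move=> pS po; have [|[_ d_3]] := mul3_dvdn_cases d_gt0 (order_cell_shift_dvd3 pS).
  by lia.
(* d * d = 1 (mod 3), so tau^(d * d) = tau \o tau^(3 * (d * d %/ 3)). *)
have dd_mod3 : d * d %% 3 = 1.
  rewrite -modnMm; move: d_3; rewrite /dvdn.
  by case: (d %% 3) (ltn_pmod d (isT : 0 < 3)) => [|[|[|k]]].
have : iter (d * d) tau p == p by rewrite (iter_order_eq cell_shift_inj) po dvdn_mull.
case: p {pS po} => x y.
by rewrite {1}(divn_eq (d * d) 3) dd_mod3 addn1 iterS mulnC iter_cell_shift3 => /eqP[_ <-].
Qed.

Lemma card_closed_cells_order_d_le : #|S :&: Od| <= #|D|.
Proof.
rewrite -(card_in_imset (f := fst)).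
  apply/subset_leq_card/subsetP => _ /imsetP[p + ->].
  by rewrite in_setI inE => /andP[/and3P[]].
move=> p q; rewrite !in_setI ![_ \in Od]inE => /andP[pS /eqP po] /andP[qS /eqP qo] pq.
rewrite [p]surjective_pairing [q]surjective_pairing.
by rewrite (cell_shift_order_d_snd pS po) (cell_shift_order_d_snd qS qo) pq.
Qed.

Lemma closed_cells_order_d_eq0 : 3 %| d -> S :&: Od = set0.
Proof.
move=> d_3; apply/setP => p; rewrite in_setI in_set0 [_ \in Od]inE.
apply/negP => /andP[pS /eqP po].
have [|[_]] := mul3_dvdn_cases d_gt0 (order_cell_shift_dvd3 pS); last by rewrite d_3.
by lia.
Qed.

Lemma fclosed_closed_cells_order_d : fclosed tau (S :&: Od).
Proof.
move=> p _ /eqP <-.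
by rewrite !in_setI cell_shift_closed !inE (order_f cell_shift_inj).
Qed.

Lemma fclosed_closed_cells_order_3d : fclosed tau (S :\: Od).
Proof.
move=> p _ /eqP <-.
by rewrite !in_setD cell_shift_closed !inE (order_f cell_shift_inj).
Qed.

Lemma fcard_closed_cells_order_d : fcard tau (S :&: Od) * d = #|S :&: Od|.
Proof.
apply: (fcard_order_set cell_shift_inj); last exact: fclosed_closed_cells_order_d.
by apply/subsetP => p; rewrite in_setI [_ \in Od]inE => /andP[].
Qed.

Lemma fcard_closed_cells_order_3d :
  fcard tau (S :\: Od) * (3 * d) = #|S :\: Od|.
Proof.
apply: (fcard_order_set cell_shift_inj).
  apply/subsetP => p; rewrite in_setD inE => /andP[p_d pS]; rewrite inE.
  have [-> //|[po _]] := mul3_dvdn_cases d_gt0 (order_cell_shift_dvd3 pS).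
  by rewrite po eqxx in p_d.
exact: fclosed_closed_cells_order_3d.
Qed.

Lemma closed_cell_orbit_count (r := num_cycles_of_length g d) :
  exists e1 e2, [/\ e1 + 3 * e2 + r * (n - r * d) = r * (r * d), e1 <= r
                   & 3 %| d -> e1 = 0].
Proof.
have card_D : #|D| = r * d := card_cycle_len_eq g d_gt0.
exists (fcard tau (S :&: Od)), (fcard tau (S :\: Od)); split.
- apply/eqP; rewrite -(eqn_pmul2r d_gt0); apply/eqP.
  have := card_closed_cells; rewrite -(cardsID Od S) -fcard_closed_cells_order_d.
  rewrite -fcard_closed_cells_order_3d card_D; move: (n - r * d) => k; nia.
- rewrite -(leq_pmul2r d_gt0) fcard_closed_cells_order_d -card_D.
  exact: card_closed_cells_order_d_le.
- move=> d_3; have := fcard_closed_cells_order_d.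
  by rewrite closed_cells_order_d_eq0 // cards0 => /eqP; rewrite muln_eq0 => /orP[/eqP|] //; lia.
Qed.

End ClosedCells.

Theorem theorem5p1 (n : nat) (gamma : {perm 'I_n}) (d : nat) :
  0 < d ->
  ~ (exists d' d'' : nat,
        [/\ cycle_length_of gamma d', cycle_length_of gamma d'',
            d <> d', d <> d'' &
            lcmn d d' = lcmn d d'' /\ lcmn d d'' = lcmn d' d'']) ->
  (num_cycles_of_length gamma d = 1 /\ (n + d) %% 3 = 1
   \/ 3 %| d /\ ~~ (3 %| n * num_cycles_of_length gamma d)) ->
  ~ in_Par123 1 1 gamma.
Proof.
move=> d_gt0 no_pair cases [L [latinL autL]].
have Lg := autoparatopism123_11P autL.
have rd_n := num_cycles_of_length_le gamma d_gt0.
have [e1 [e2 [count e1_r e1_0]]] := closed_cell_orbit_count latinL Lg d_gt0 no_pair.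
case: cases => [[r1 nd_mod3] | [d_3 /negP]]; first by rewrite r1 in count e1_r rd_n; lia.
by apply; rewrite e1_0 // in count; apply: dvdn3_orbit_count count.
Qed.
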